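(* For any voter matrix $V$ with $t$ topics, there exists a proposal $p$ supported by $V$ with $R_p\ge \frac12-\frac1t$. In particular, $r_V\ge \frac23-\frac{4}{3t}$.
   Context: A voter matrix with $t$ topics is a matrix $V\in\{Y,N\}^{n\times t}$ for positive integers $n,t$ (rows are voters), subject to the standing assumption that in every column the number of entries $Y$ is at least the number of entries $N$. A proposal is a vector $p\in\{Y,N\}^t$. A voter $v$ supports $p$ if the Hamming distance between $v$ and $p$ is at most $t/2$; $p$ is supported by $V$ if at least $n/2$ rows of $V$ support $p$. For $i=1,\dots,t$ let $m_i$ be the fraction of entries $Y$ in column $i$ of $V$, and $m_V=\frac1t\sum_i m_i$. For a proposal $p$ let $m_i'=m_i$ if $p_i=Y$ and $m_i'=1-m_i$ if $p_i=N$; set $R_p=\frac1t\sum_i m_i'$ and $r_p=R_p/m_V$. $r_V$ is the maximum of $r_p$ over all proposals $p$ supported by $V$. *)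

From mathcomp Require Import all_boot all_order all_algebra.
Set Implicit Arguments. Unset Strict Implicit. Unset Printing Implicit Defensive.
Import Order.TTheory GRing.Theory Num.Theory.
Local Open Scope ring_scope.

(* A voter matrix: n voters (rows), t topics (columns), entries Y=true / N=false. *)
Definition voter_matrix (n t : nat) := 'M[bool]_(n, t).
Definition proposal (t : nat) := {ffun 'I_t -> bool}.

Definition col_majority_Y n t (V : voter_matrix n t) : Prop :=
  forall i : 'I_t, (#|[set k | ~~ V k i]| <= #|[set k | V k i]|)%N.

Definition hdist n t (V : voter_matrix n t) (k : 'I_n) (p : proposal t) : nat :=
  #|[set i : 'I_t | V k i != p i]|.

Definition supports n t (V : voter_matrix n t) (k : 'I_n) (p : proposal t) : bool :=
  (2 * hdist V k p <= t)%N.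

Definition supported n t (V : voter_matrix n t) (p : proposal t) : bool :=
  (n <= 2 * #|[set k | supports V k p]|)%N.

Definition mcol n t (V : voter_matrix n t) (i : 'I_t) : rat :=
  (#|[set k | V k i]|)%:R / n%:R.

Definition mV n t (V : voter_matrix n t) : rat :=
  (\sum_(i < t) mcol V i) / t%:R.

Definition Rp n t (V : voter_matrix n t) (p : proposal t) : rat :=
  (\sum_(i < t) (if p i then mcol V i else 1 - mcol V i)) / t%:R.

Definition rp n t (V : voter_matrix n t) (p : proposal t) : rat :=
  Rp V p / mV V.

(* r_V : maximum of r_p over proposals supported by V (0 if there is none;
   the theorem shows one always exists, and r_p >= 0). *)
Definition rV n t (V : voter_matrix n t) : rat :=
  \big[Num.max/0]_(p : proposal t | supported V p) rp V p.

From mathcomp Require Import all_boot all_order all_algebra.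
From mathcomp Require Import ring lra zify.
Import Order.TTheory GRing.Theory Num.Theory.
Local Open Scope ring_scope.

(* Let A(p) = t R_p. Complementing p turns A(p) into t - A(p) and each voter's
   distance d into t - d, so every voter supports p or its complement, and so
   does V. Along the prefix proposals Y^j N^(t-j), A moves by at most 1 per step
   from A(N^t) <= t/2 up to A(Y^t) >= t/2, so some prefix p has
   t/2 <= A(p) <= t/2 + 1; p or its complement is supported and has A >= t/2 - 1.
   For r_V, note m_V >= 1/2. If m_V <= 3/4, divide R_p >= 1/2 - 1/t by m_V.
   If m_V > 3/4, the mean distance of a voter to Y^t is below t/4, so by
   Markov's inequality a majority supports Y^t, whose ratio is 1. *)

Lemma exists_unit_step_crossing (R : realDomainType) (f : nat -> R) (c : R) (N : nat) :
  f 0%N <= c -> c <= f N -> (forall j, f j.+1 <= f j + 1) ->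
  exists j, c <= f j <= c + 1.
Proof.
move=> f0_le c_le step; have crossed : exists j, c <= f j by exists N.
case: (ex_minnP crossed) => j c_le_fj j_min; exists j; rewrite c_le_fj /=.
case: j c_le_fj j_min => [|j] c_le_fj j_min; first lra.
have : f j < c by rewrite ltNge; apply/negP => /j_min; rewrite ltnn.
by have := step j; lra.
Qed.

Lemma card_gt_mul_le_sum (T : finType) (f : T -> nat) (a : nat) :
  (#|[set x | a < f x]| * a.+1 <= \sum_x f x)%N.
Proof.
rewrite -sum_nat_cond_const [X in (_ <= X)%N](bigID (fun x => a < f x)%N) /=.
by apply: leq_trans (leq_addr _ _); apply: leq_sum.
Qed.

Lemma ler_div_num_den (R : realFieldType) (a x m M : R) :
  0 <= x -> a <= x -> 0 < m -> m <= M -> a / M <= x / m.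
Proof.
move=> x_ge0 a_le m_gt0 m_le; have M_gt0 : 0 < M by apply: lt_le_trans m_le.
rewrite ler_pdivlMr // mulrAC ler_pdivrMr //.
by case: (lerP 0 a) => a_sign; nra.
Qed.

Definition propC {t} (p : proposal t) : proposal t := [ffun i => ~~ p i].
Definition prefixY t (j : nat) : proposal t := [ffun i : 'I_t => (i < j)%N].
Definition allY t : proposal t := [ffun=> true].

Lemma prefixY0 t : prefixY t 0 = propC (allY t).
Proof. by apply/ffunP => i; rewrite !ffunE ltn0. Qed.

Lemma prefixY_full t : prefixY t t = allY t.
Proof. by apply/ffunP => i; rewrite !ffunE ltn_ord. Qed.

Definition agreement {n t} (V : voter_matrix n t) (p : proposal t) : rat :=
  \sum_(i < t) (if p i then mcol V i else 1 - mcol V i).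

Section VoterMatrix.
Context {n t : nat} (V : voter_matrix n t).

Lemma RpE p : Rp V p = agreement V p / t%:R.
Proof. by []. Qed.

Lemma card_colN_colY i : (#|[set k | ~~ V k i]| + #|[set k | V k i]| = n)%N.
Proof.
have -> : [set k | ~~ V k i] = ~: [set k | V k i] by apply/setP => k; rewrite !inE.
by rewrite addnC cardsC card_ord.
Qed.

Lemma mcol_ge0 i : 0 <= mcol V i.
Proof. by rewrite /mcol divr_ge0. Qed.

Lemma mcol_le1 i : mcol V i <= 1.
Proof.
rewrite /mcol; case: (posnP n) => [n0 | n_gt0].
  have -> : n%:R = 0 :> rat by rewrite n0.
  by rewrite invr0 mulr0.
rewrite ler_pdivrMr ?ltr0n //; rewrite mul1r ler_nat.
by have := card_colN_colY i; lia.
Qed.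

Lemma agreement_ge0 p : 0 <= agreement V p.
Proof.
apply: sumr_ge0 => i _.
by have := mcol_ge0 i; have := mcol_le1 i; case: (p i); lra.
Qed.

Lemma Rp_ge0 p : 0 <= Rp V p.
Proof. by rewrite RpE divr_ge0 ?agreement_ge0. Qed.

Lemma agreement_propC p : agreement V (propC p) = t%:R - agreement V p.
Proof.
have -> : t%:R = \sum_(i < t) (1 : rat) by rewrite sumr_const card_ord.
rewrite /agreement -sumrB.
by apply: eq_bigr => i _; rewrite ffunE; case: (p i) => /=; ring.
Qed.

Lemma agreement_le_hamming p q :
  agreement V p <= agreement V q + #|[set i | p i != q i]|%:R.
Proof.
rewrite /agreement -sum1_card natr_sum [\sum_(i in _) _]big_mkcond -big_split /=.
apply: ler_sum => i _; rewrite inE.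
by have := mcol_ge0 i; have := mcol_le1 i; case: (p i); case: (q i) => /=; lra.
Qed.

Lemma agreement_prefixY_succ j :
  agreement V (prefixY t j.+1) <= agreement V (prefixY t j) + 1.
Proof.
apply: le_trans (agreement_le_hamming _ (prefixY t j)) _.
rewrite lerD2l (ler_nat _ _ 1).
have at_j (z : 'I_t) : (z < j.+1)%N != (z < j)%N -> val z = j.
  by rewrite ltnS; case: ltngtP.
apply/card_le1_eqP => x y; rewrite !inE !ffunE => /at_j x_j /at_j y_j.
by apply: val_inj; rewrite x_j y_j.
Qed.

Lemma agreement_allY : agreement V (allY t) = \sum_(i < t) mcol V i.
Proof. by apply: eq_bigr => i _; rewrite ffunE. Qed.

Lemma Rp_allY : Rp V (allY t) = mV V.
Proof. by rewrite RpE agreement_allY. Qed.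

Lemma hdist_le k p : (hdist V k p <= t)%N.
Proof. by apply: leq_trans (max_card _) _; rewrite card_ord. Qed.

Lemma hdist_propC k p : hdist V k (propC p) = (t - hdist V k p)%N.
Proof.
rewrite /hdist.
have -> : [set i | V k i != propC p i] = ~: [set i | V k i != p i].
  by apply/setP => i; rewrite !inE ffunE; case: (V k i); case: (p i).
by rewrite cardsCs card_ord setCK.
Qed.

Lemma supports_or_propC k p : supports V k p || supports V k (propC p).
Proof. by rewrite /supports hdist_propC; have := hdist_le k p; lia. Qed.

Lemma supported_or_propC p : supported V p || supported V (propC p).
Proof.
rewrite /supported.
set A := [set k | supports V k p]; set B := [set k | supports V k (propC p)].
have AUB : A :|: B = setT by apply/setP => k; rewrite !inE supports_or_propC.
by have := cardsUI A B; rewrite AUB cardsT card_ord; lia.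
Qed.

Lemma hdist_allY k : hdist V k (allY t) = #|[set i | ~~ V k i]|.
Proof. by apply: eq_card => i; rewrite !inE ffunE; case: (V k i). Qed.

Lemma sum_hdist_allY :
  (\sum_k hdist V k (allY t) = \sum_(i < t) #|[set k | ~~ V k i]|)%N.
Proof.
under eq_bigr do rewrite hdist_allY -sum1_card big_mkcond.
under [RHS]eq_bigr do rewrite -sum1_card big_mkcond.
rewrite exchange_big /=; apply: eq_bigr => i _; apply: eq_bigr => k _.
by rewrite !inE.
Qed.

Lemma rp_le_rV p : supported V p -> rp V p <= rV V.
Proof. exact: le_bigmax_cond. Qed.

Hypothesis n_gt0 : (0 < n)%N.
Hypothesis t_gt0 : (0 < t)%N.

Lemma sum_hdist_allY_mV :
  (\sum_k hdist V k (allY t))%:R = n%:R * t%:R * (1 - mV V).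
Proof.
have colN i : #|[set k | ~~ V k i]|%:R = n%:R * (1 - mcol V i).
  have := congr1 (fun m => m%:R : rat) (card_colN_colY i); rewrite natrD /=.
  by rewrite /mcol mulrBr mulr1 mulrC divfK ?pnatr_eq0 -?lt0n //; lra.
have sum_mcol : \sum_(i < t) mcol V i = t%:R * mV V.
  by rewrite /mV mulrC divfK // pnatr_eq0 -lt0n.
rewrite sum_hdist_allY natr_sum; under eq_bigr do rewrite colN.
by rewrite -mulr_sumr sumrB sumr_const card_ord sum_mcol; ring.
Qed.

Lemma supported_allY : 3 / 4 < mV V -> supported V (allY t).
Proof.
move=> mV_gt; set A := [set k | supports V k (allY t)].
have AC : ~: A = [set k | t < 2 * hdist V k (allY t)]%N.
  by apply/setP => k; rewrite !inE /supports -ltnNge.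
have := @card_gt_mul_le_sum _ (fun k => 2 * hdist V k (allY t))%N t.
rewrite -AC -big_distrr /= -(ler_nat rat) !natrM sum_hdist_allY_mV -addn1 natrD.
move=> markov; have := cardsC A; rewrite card_ord.
move=> /(congr1 (fun m => m%:R : rat)); rewrite natrD => cardA.
rewrite /supported -/A -(ler_nat rat) natrM.
have n_pos : (0 : rat) < n%:R by rewrite ltr0n.
have t_pos : (0 : rat) < t%:R by rewrite ltr0n.
have nt_pos : (0 : rat) < n%:R * t%:R by rewrite mulr_gt0.
(* Markov: each voter outside A has 2 d >= t + 1, while 2 \sum d < n t / 2. *)
have : #|~: A|%:R * (t%:R + 1) < n%:R / 2 * (t%:R + 1) :> rat by nra.
by rewrite ltr_pM2r; lra.
Qed.

Hypothesis maj : col_majority_Y V.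

Lemma mcol_ge_half i : 1 / 2 <= mcol V i.
Proof.
have : (n <= 2 * #|[set k | V k i]|)%N.
  by have := maj i; have := card_colN_colY i; lia.
rewrite -(ler_nat rat) natrM /mcol ler_pdivlMr; last by rewrite ltr0n.
lra.
Qed.

Lemma agreement_allY_ge : t%:R / 2 <= agreement V (allY t).
Proof.
have -> : t%:R / 2 = \sum_(i < t) (1 / 2 : rat).
  by rewrite sumr_const card_ord; field.
by rewrite agreement_allY; apply: ler_sum => i _; apply: mcol_ge_half.
Qed.

Lemma exists_supported_agreement_ge :
  exists p, supported V p /\ t%:R / 2 - 1 <= agreement V p.
Proof.
have allY_ge := agreement_allY_ge.
have [||j /andP[lo hi]] := @exists_unit_step_crossing _
  (fun j => agreement V (prefixY t j)) (t%:R / 2) t _ _ agreement_prefixY_succ.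
- by rewrite /= prefixY0 agreement_propC; lra.
- by rewrite /= prefixY_full.
have [supp | suppC] := orP (supported_or_propC (prefixY t j)).
  by exists (prefixY t j); split => //; lra.
by exists (propC (prefixY t j)); rewrite agreement_propC; split => //; lra.
Qed.

Lemma exists_supported_Rp_ge :
  exists p, supported V p /\ 1 / 2 - 1 / t%:R <= Rp V p.
Proof.
have t_pos : (0 : rat) < t%:R by rewrite ltr0n.
have [p [supp agr]] := exists_supported_agreement_ge.
exists p; split; first exact: supp.
rewrite RpE ler_pdivlMr; last exact: t_pos.
rewrite mulrBl !mul1r mulVf; last by rewrite gt_eqF.
by rewrite mulrC.
Qed.

Lemma mV_ge_half : 1 / 2 <= mV V.
Proof.
rewrite -Rp_allY RpE ler_pdivlMr; last by rewrite ltr0n.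
by have := agreement_allY_ge; lra.
Qed.

Lemma rp_allY : rp V (allY t) = 1.
Proof. by rewrite /rp Rp_allY divff // gt_eqF //; have := mV_ge_half; lra. Qed.

End VoterMatrix.

Theorem lemma5p2 (n t : nat) (V : voter_matrix n t) :
  (0 < n)%N -> (0 < t)%N -> col_majority_Y V ->
  (exists p : proposal t, supported V p /\ 1 / 2 - 1 / t%:R <= Rp V p) /\
  2 / 3 - 4 / (3 * t%:R) <= rV V.
Proof.
move=> n_gt0 t_gt0 maj.
have [p [supp Rp_ge]] := exists_supported_Rp_ge V n_gt0 t_gt0 maj.
split; first by exists p.
have t_pos : (0 : rat) < t%:R by rewrite ltr0n.
have -> : 2 / 3 - 4 / (3 * t%:R) = (1 / 2 - 1 / t%:R) / (3 / 4) :> rat.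
  by field; rewrite gt_eqF.
have [mV_le | mV_gt] := lerP (mV V) (3 / 4).
  apply: le_trans _ (rp_le_rV V p supp); apply: ler_div_num_den => //.
    exact: Rp_ge0.
  by have := mV_ge_half V n_gt0 t_gt0 maj; lra.
apply: le_trans _ (rp_le_rV V _ (supported_allY V n_gt0 t_gt0 mV_gt)).
rewrite (rp_allY V n_gt0 t_gt0 maj).
have : 0 <= 1 / t%:R :> rat by rewrite divr_ge0 ?ler0n.
clear; lra.
Qed.
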